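(* Let $G$ be a group and $K$ a zero-sum-free semifield. (1) There is a one-to-one correspondence between isomorphism classes of pairs $(V,v)$, where $V$ is an indecomposable representation of $G$ over $K$ and $v$ is a vector belonging to some basis of $V$, and pairs $(H,\chi)$ consisting of a subgroup $H\subseteq G$ and a group homomorphism $\chi:H\to K^\times$. Here $(V,v)$ and $(W,w)$ are isomorphic if there is an isomorphism of representations $V\to W$ mapping $v$ to $w$. (2) There is a one-to-one correspondence between isomorphism classes of indecomposable representations of $G$ over $K$ and equivalence classes of pairs $(H,\chi)$ as in (1), where $(H,\chi)\sim(H',\chi')$ if there is $g\in G$ with $H'=gHg^{-1}$ and $\chi'(h')=\chi(g^{-1}h'g)$ for all $h'\in H'$.
   Context: All semirings are commutative. A semifield is a semiring whose nonzero elements form a multiplicative group $K^\times$; it is zero-sum-free if $a+b=0$ implies $a=b=0$. A representation of $G$ over $K$ is a $K$-linear action of $G$ on a free module $K^n$; isomorphisms of representations are $G$-equivariant $K$-module isomorphisms. $V$ is indecomposable if it cannot be written as a direct sum of nontrivial $G$-stable submodules. *)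

(* Free modules
   K^(I) over an arbitrary basis index type I are encoded as finitely supported
   functions I -> K. *)
From HB Require Import structures.
From mathcomp Require Import all_boot all_algebra.
From Stdlib Require List.
Unset Implicit Arguments.
Import GRing.Theory.
Local Open Scope ring_scope.

Section Group.
Variables (G : Type) (mul : G -> G -> G) (one : G) (inv : G -> G).

Record is_group : Prop := {
  gmulA : forall x y z, mul x (mul y z) = mul (mul x y) z;
  gmul1g : forall x, mul one x = x;
  gmulVg : forall x, mul (inv x) x = one }.

Definition is_subgroup (H : G -> Prop) : Prop :=
  H one /\ (forall x y, H x -> H y -> H (mul x y)) /\ (forall x, H x -> H (inv x)).
End Group.

(* nonzero elements form a multiplicative group (1 <> 0 is part of comNzSemiRingType) *)
Definition semifield (K : comNzSemiRingType) : Prop :=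
  forall x : K, x != 0 -> exists y : K, x * y = 1.

Definition zero_sum_free (K : comNzSemiRingType) : Prop :=
  forall a b : K, a + b = 0 -> a = 0 /\ b = 0.

Section Modules.
Variable K : comNzSemiRingType.

Definition fin_supp (I : Type) (f : I -> K) : Prop :=
  exists s : list I, forall i, ~ List.In i s -> f i = 0.

Definition vzero (I : Type) : I -> K := fun _ => 0.
Definition vadd (I : Type) (f g : I -> K) : I -> K := fun i => f i + g i.
Definition vscale (I : Type) (c : K) (f : I -> K) : I -> K := fun i => c * f i.

Definition is_linear (I J : Type) (phi : (I -> K) -> (J -> K)) : Prop :=
  (forall f, fin_supp I f -> fin_supp J (phi f)) /\
  (forall f g, fin_supp I f -> fin_supp I g -> phi (vadd I f g) = vadd J (phi f) (phi g)) /\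
  (forall c f, fin_supp I f -> phi (vscale I c f) = vscale J c (phi f)).

Definition lincomb (I J : Type) (s : list J) (c : J -> K) (b : J -> I -> K) : I -> K :=
  foldr (fun j acc => vadd I (vscale I (c j) (b j)) acc) (vzero I) s.

Definition supported_on (J : Type) (c : J -> K) (s : list J) : Prop :=
  List.NoDup s /\ forall j, ~ List.In j s -> c j = 0.

Definition is_basis (I J : Type) (b : J -> I -> K) : Prop :=
  (forall j, fin_supp I (b j)) /\
  (forall f, fin_supp I f -> exists (c : J -> K) (s : list J),
      supported_on J c s /\ f = lincomb I J s c b) /\
  (forall c s c' s', supported_on J c s -> supported_on J c' s' ->
      lincomb I J s c b = lincomb I J s' c' b -> forall j, c j = c' j).

Definition in_some_basis (I : Type) (v : I -> K) : Prop :=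
  exists (J : Type) (b : J -> I -> K) (j : J), is_basis I J b /\ b j = v.

Section Reps.
Variables (G : Type) (mul : G -> G -> G) (one : G).

Record is_rep (I : Type) (rho : G -> (I -> K) -> (I -> K)) : Prop := {
  rep_lin : forall g, is_linear I I (rho g);
  rep_one : forall f, fin_supp I f -> rho one f = f;
  rep_mul : forall g h f, fin_supp I f -> rho (mul g h) f = rho g (rho h f) }.

Record rep := Rep {
  rI : Type;
  ract : G -> (rI -> K) -> (rI -> K);
  ractP : is_rep rI ract }.

Definition submodule (I : Type) (U : (I -> K) -> Prop) : Prop :=
  (forall f, U f -> fin_supp I f) /\ U (vzero I) /\
  (forall f g, U f -> U g -> U (vadd I f g)) /\ (forall c f, U f -> U (vscale I c f)).

Definition G_stable (V : rep) (U : (rI V -> K) -> Prop) : Prop :=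
  forall g f, U f -> U (ract V g f).

Definition nontrivial (I : Type) (U : (I -> K) -> Prop) : Prop :=
  exists f, U f /\ f <> vzero I.

Definition direct_sum (I : Type) (U W : (I -> K) -> Prop) : Prop :=
  forall f, fin_supp I f -> exists! p : (I -> K) * (I -> K), U p.1 /\ W p.2 /\ f = vadd I p.1 p.2.

Definition indecomposable (V : rep) : Prop :=
  (exists f : rI V -> K, fin_supp (rI V) f /\ f <> vzero (rI V)) /\
  ~ (exists U W, submodule (rI V) U /\ submodule (rI V) W /\ G_stable V U /\ G_stable V W /\
                 nontrivial (rI V) U /\ nontrivial (rI V) W /\ direct_sum (rI V) U W).

Definition rep_iso_map (V W : rep) (phi : (rI V -> K) -> (rI W -> K)) : Prop :=
  is_linear (rI V) (rI W) phi /\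
  (exists psi : (rI W -> K) -> (rI V -> K), is_linear (rI W) (rI V) psi /\
     (forall f, fin_supp (rI V) f -> psi (phi f) = f) /\
     (forall f, fin_supp (rI W) f -> phi (psi f) = f)) /\
  (forall g f, fin_supp (rI V) f -> phi (ract V g f) = ract W g (phi f)).

Definition rep_iso (V W : rep) : Prop := exists phi, rep_iso_map V W phi.

Definition pair_iso (V : rep) (v : rI V -> K) (W : rep) (w : rI W -> K) : Prop :=
  exists phi, rep_iso_map V W phi /\ phi v = w.

(* pairs (H, chi) : subgroup H and homomorphism chi : H -> K^x;
   chi is given as a function on G, only its values on H matter *)
Definition is_char (H : G -> Prop) (chi : G -> K) : Prop :=
  (forall h, H h -> chi h != 0) /\
  (forall h k, H h -> H k -> chi (mul h k) = chi h * chi k).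

Variable inv : G -> G.

Definition chpair_valid (p : (G -> Prop) * (G -> K)) : Prop :=
  is_subgroup G mul one inv p.1 /\ is_char p.1 p.2.

Definition chpair_eq (p q : (G -> Prop) * (G -> K)) : Prop :=
  (forall g, p.1 g <-> q.1 g) /\ (forall h, p.1 h -> p.2 h = q.2 h).

Definition chpair_conj (p q : (G -> Prop) * (G -> K)) : Prop :=
  exists g, (forall x, q.1 x <-> p.1 (mul (inv g) (mul x g))) /\
            (forall h, q.1 h -> q.2 h = p.2 (mul (inv g) (mul h g))).
End Reps.
End Modules.

Arguments is_group {G}.
Arguments is_subgroup {G}.
Arguments rep K {G} mul one.
Arguments rI {K G mul one}.
Arguments ract {K G mul one}.
Arguments indecomposable {K G mul one}.
Arguments in_some_basis {K I}.
Arguments rep_iso {K G mul one}.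
Arguments pair_iso {K G mul one}.
Arguments chpair_valid {K G} mul one inv.
Arguments chpair_eq {K G}.
Arguments chpair_conj {K G} mul inv.

(* Over a zero-sum-free semifield an invertible linear map of free modules sends
   each unit vector to a multiple of a unit vector, because expanding
   [e_i = B (A e_i)] allows no cancellation; likewise the vectors belonging to
   some basis are exactly the nonzero multiples of unit vectors.  So G permutes
   the coordinate lines [K e_i], an orbit of lines that is not everything spans
   a proper G-stable direct summand, and V is indecomposable iff G acts
   transitively on the lines.  A basis vector v yields the stabiliser H of its
   line and the character chi by which H acts on it.  By transitivity (V, v) is
   determined by (H, chi): the isomorphism sends [g v] to [g w].  Every (H, chi)
   comes from the monomial representation induced on G/H, and replacing v by
   another basis vector of V conjugates (H, chi). *)

From mathcomp Require Import all_boot all_algebra.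
From Stdlib Require Import Classical ClassicalEpsilon FunctionalExtensionality.
From Stdlib Require Import ProofIrrelevance PropExtensionality.
Set Implicit Arguments. Unset Strict Implicit. Unset Printing Implicit Defensive.
Import GRing.Theory.
Local Open Scope ring_scope.

Arguments vzero {K I}. Arguments vadd {K I}. Arguments vscale {K I}.
Arguments fin_supp {K I}. Arguments is_linear {K I J}. Arguments lincomb {K I J}.
Arguments supported_on {K J}. Arguments is_basis {K I J}.
Arguments submodule {K I}. Arguments nontrivial {K I}. Arguments direct_sum {K I}.
Arguments ractP {K G mul one}. Arguments G_stable {K G mul one}.
Arguments rep_iso_map {K G mul one}.

Definition pdec (P : Prop) : {P} + {~ P} := excluded_middle_informative P.

Section Semifield.
Variable K : comNzSemiRingType.
Hypothesis HK : semifield K.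

Lemma sf_mul_eq0 (a b : K) : a * b = 0 -> a = 0 \/ b = 0.
Proof.
move=> ab0; case: (eqVneq a 0) => [|a_neq0]; first by left.
have [y ay1] := HK a_neq0.
by right; rewrite -[b]mul1r -ay1 mulrAC ab0 mul0r.
Qed.

Lemma sf_mulf_neq0 (a b : K) : a != 0 -> b != 0 -> a * b != 0.
Proof.
by move=> /negPf a0 /negPf b0; apply/eqP => /sf_mul_eq0 [/eqP|/eqP]; rewrite ?a0 ?b0.
Qed.

Definition kinv (c : K) : K := epsilon (inhabits 0) (fun y => c * y = 1).
Arguments kinv : simpl never.

Lemma mulr_kinv (c : K) : c != 0 -> c * kinv c = 1.
Proof. by move=> /HK; apply: epsilon_spec. Qed.

Lemma mulkinv_r (c : K) : c != 0 -> kinv c * c = 1.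
Proof. by move=> c0; rewrite mulrC mulr_kinv. Qed.

Lemma kinv_neq0 (c : K) : c != 0 -> kinv c != 0.
Proof.
move=> /mulr_kinv cc1; apply/eqP => c0.
by move: cc1; rewrite c0 mulr0 => /eqP; rewrite eq_sym oner_eq0.
Qed.

End Semifield.

Section FreeModule.
Variables (K : comNzSemiRingType) (I : Type).
Implicit Types (f g : I -> K) (c d : K).

Definition unitv (i : I) : I -> K := fun k => if pdec (k = i) then 1 else 0.
Arguments unitv : simpl never.

Lemma unitv_id i : unitv i i = 1. Proof. by rewrite /unitv; case: pdec. Qed.
Lemma unitv_ne i k : k <> i -> unitv i k = 0. Proof. by rewrite /unitv; case: pdec. Qed.

Lemma unitv_neq0 i : unitv i <> vzero.
Proof. by move=> /(congr1 (fun f => f i)); rewrite unitv_id /vzero => /eqP; rewrite oner_eq0. Qed.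

Lemma fin_supp_unitv i : fin_supp (unitv i).
Proof. by exists [:: i] => k ki; apply: unitv_ne => ki0; apply: ki; left. Qed.

Lemma fin_supp0 : fin_supp (@vzero K I). Proof. by exists nil. Qed.

Lemma fin_supp_add f g : fin_supp f -> fin_supp g -> fin_supp (vadd f g).
Proof.
move=> [s fs] [t gt]; exists (s ++ t)%list => k kst.
by rewrite /vadd fs ?gt ?addr0 // => ?; apply: kst; apply: List.in_or_app; tauto.
Qed.

Lemma fin_supp_scale c f : fin_supp f -> fin_supp (vscale c f).
Proof. by move=> [s fs]; exists s => k ks; rewrite /vscale fs ?mulr0. Qed.

Lemma vaddr0 f : vadd f vzero = f.
Proof. by apply: functional_extensionality => k; rewrite /vadd addr0. Qed.
Lemma vadd0r f : vadd vzero f = f.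
Proof. by apply: functional_extensionality => k; rewrite /vadd add0r. Qed.
Lemma vscale1 f : vscale 1 f = f.
Proof. by apply: functional_extensionality => k; rewrite /vscale mul1r. Qed.
Lemma vscale0 f : vscale 0 f = vzero.
Proof. by apply: functional_extensionality => k; rewrite /vscale mul0r. Qed.
Lemma vscaleA c d f : vscale c (vscale d f) = vscale (c * d) f.
Proof. by apply: functional_extensionality => k; rewrite /vscale mulrA. Qed.

Lemma vscaleK c f : semifield K -> c != 0 -> vscale (kinv c) (vscale c f) = f.
Proof. by move=> HK c0; rewrite vscaleA mulkinv_r // vscale1. Qed.

Lemma vec_neq0 f : f <> vzero -> exists k, f k != 0.
Proof.
move=> f0; apply: NNPP => nz; apply: f0; apply: functional_extensionality => k.
by case: (eqVneq (f k) 0) => // fk; case: nz; exists k.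
Qed.

Lemma vec_supp1 f i : (forall k, k <> i -> f k = 0) -> f = vscale (f i) (unitv i).
Proof.
move=> fi; apply: functional_extensionality => k; rewrite /vscale /unitv.
by destruct (pdec (k = i)) as [->|ki]; [rewrite mulr1 | rewrite fi // mulr0].
Qed.

Lemma scale_unitv_inj c d i j :
  c != 0 -> vscale c (unitv i) = vscale d (unitv j) -> i = j /\ c = d.
Proof.
move=> c0 E; have ij : i = j.
  apply: NNPP => ij; move: (congr1 (fun f => f i) E) c0.
  by rewrite /vscale unitv_id unitv_ne // mulr1 mulr0 => ->; rewrite eqxx.
by subst j; split => //; move: (congr1 (fun f => f i) E); rewrite /vscale unitv_id !mulr1.
Qed.

Lemma scale_unitv_coord {c i k} : vscale c (unitv i) k != 0 -> k = i.
Proof.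
by move=> cik; apply: NNPP => ki; move: cik; rewrite /vscale unitv_ne ?mulr0 ?eqxx.
Qed.

Lemma scale_inj c d f : semifield K -> f <> vzero -> vscale c f = vscale d f -> c = d.
Proof.
move=> HK /vec_neq0 [k fk] /(congr1 (fun h => h k * kinv (f k))).
by rewrite /vscale -!mulrA !mulr_kinv // !mulr1.
Qed.

Definition erase f (x : I) : I -> K := fun k => if pdec (k = x) then 0 else f k.

Lemma vec_decomp f x : f = vadd (vscale (f x) (unitv x)) (erase f x).
Proof.
apply: functional_extensionality => k; rewrite /vadd /vscale /erase /unitv.
by destruct (pdec (k = x)) as [->|kx]; rewrite /= ?mulr1 ?addr0 ?mulr0 ?add0r.
Qed.

Lemma fin_supp_erase f x : fin_supp f -> fin_supp (erase f x).
Proof.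
by move=> [s fs]; exists s => k ks; rewrite /erase; destruct (pdec (k = x)); rewrite //= fs.
Qed.

Lemma fin_supp_ind (P : (I -> K) -> Prop) :
  P vzero -> (forall c i f, fin_supp f -> P f -> P (vadd (vscale c (unitv i)) f)) ->
  forall f, fin_supp f -> P f.
Proof.
move=> P0 PS f [s]; elim: s f => [|x s IH] f fs.
  by have -> : f = vzero by apply: functional_extensionality => k; apply: fs.
have es : forall k, ~ List.In k s -> erase f x k = 0.
  move=> k ks; rewrite /erase; destruct (pdec (k = x)) as [|kx] => //=.
  by apply: fs => -[xk|] //; apply: kx.
by rewrite (vec_decomp f x); apply: PS (IH _ es); exists s.
Qed.

Definition monomial (v : I -> K) := exists (i : I) (a : K), a != 0 /\ v = vscale a (unitv i).

Lemma monomial_fin_supp v : monomial v -> fin_supp v.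
Proof. by move=> [i [a [_ ->]]]; apply/fin_supp_scale/fin_supp_unitv. Qed.

Lemma monomial_neq0 v : monomial v -> v <> vzero.
Proof.
move=> [i [a [a0 ->]]] /(congr1 (fun f => f i)).
by rewrite /vscale unitv_id mulr1 => /eqP; rewrite (negPf a0).
Qed.

Lemma monomial_unitv (i : I) : monomial (unitv i).
Proof. by exists i, 1; rewrite vscale1 oner_eq0. Qed.

End FreeModule.

(** * Isomorphisms and bases are monomial *)

Section Linear.
Variable K : comNzSemiRingType.

Section Laws.
Variables (I J : Type) (A : (I -> K) -> (J -> K)).
Hypothesis linA : is_linear A.

Lemma lin_fin_supp f : fin_supp f -> fin_supp (A f).
Proof. by case: linA => H _; apply: H. Qed.
Lemma linD f g : fin_supp f -> fin_supp g -> A (vadd f g) = vadd (A f) (A g).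
Proof. by case: linA => _ [H _]; apply: H. Qed.
Lemma linZ c f : fin_supp f -> A (vscale c f) = vscale c (A f).
Proof. by case: linA => _ [_ H]; apply: H. Qed.
Lemma lin0 : A vzero = vzero.
Proof. by rewrite -(vscale0 vzero) linZ ?vscale0 //; apply: fin_supp0. Qed.
End Laws.

Lemma lin_eq_unitv I J (A B : (I -> K) -> (J -> K)) : is_linear A -> is_linear B ->
  (forall i, A (unitv K i) = B (unitv K i)) -> forall f, fin_supp f -> A f = B f.
Proof.
move=> linA linB AB; apply: fin_supp_ind; first by rewrite !lin0.
move=> c i f fs IH; have fs_ci : fin_supp (vscale c (unitv K i)).
  exact/fin_supp_scale/fin_supp_unitv.
by rewrite !(linD _ fs_ci fs) // !linZ ?AB ?IH //; apply: fin_supp_unitv.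
Qed.

Lemma lin_comp I J L (A : (I -> K) -> (J -> K)) (B : (J -> K) -> (L -> K)) :
  is_linear A -> is_linear B -> is_linear (fun f => B (A f)).
Proof.
move=> linA linB; split; [|split].
- by move=> f fs; do 2 apply: lin_fin_supp => //.
- by move=> f g fs gs; rewrite !linD //; apply: lin_fin_supp.
- by move=> c f fs; rewrite !linZ //; apply: lin_fin_supp.
Qed.

Lemma lin_id I : is_linear (fun f : I -> K => f).
Proof. by split; [|split]. Qed.

Hypotheses (HK : semifield K) (HKz : zero_sum_free K).

Lemma lin_iso_monomial I J (A : (I -> K) -> (J -> K)) (B : (J -> K) -> (I -> K)) :
  is_linear A -> is_linear B -> (forall f, fin_supp f -> B (A f) = f) ->
  (forall f, fin_supp f -> A (B f) = f) -> forall v, monomial v -> monomial (A v).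
Proof.
move=> linA linB BA AB v [i [a [a0 ->]]]; rewrite linZ //; last exact: fin_supp_unitv.
suff [j [c [c0 ->]]] : monomial (A (unitv K i)).
  by exists j, (a * c); rewrite vscaleA sf_mulf_neq0.
set u := A (unitv K i).
have fs_u : fin_supp u by apply: lin_fin_supp => //; apply: fin_supp_unitv.
have u_neq0 : u <> vzero.
  move=> u0; apply: (@unitv_neq0 K I i).
  by rewrite -(BA _ (fin_supp_unitv _ i)) -/u u0 lin0.
have [k uk] := vec_neq0 u_neq0.
have Ei : unitv K i = vadd (vscale (u k) (B (unitv K k))) (B (erase u k)).
  rewrite -(BA _ (fin_supp_unitv _ i)) -/u {1}(vec_decomp u k) linD //.
  - by rewrite linZ //; apply: fin_supp_unitv.
  - exact/fin_supp_scale/fin_supp_unitv.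
  - exact: fin_supp_erase.
(* No cancellation in K, so each summand of e_i is supported at i. *)
have Bk : B (unitv K k) = vscale (B (unitv K k) i) (unitv K i).
  apply: vec_supp1 => m mi; move: (congr1 (fun f => f m) Ei).
  rewrite /vadd /vscale unitv_ne // => /esym /HKz [/(sf_mul_eq0 HK) [uk0|//] _].
  by move: uk; rewrite uk0 eqxx.
set mu := B (unitv K k) i in Bk.
have mu_neq0 : mu != 0.
  apply/eqP => mu0; apply: (@unitv_neq0 K J k).
  by rewrite -(AB _ (fin_supp_unitv _ k)) Bk mu0 vscale0 lin0.
exists k, (kinv mu); split; first exact: kinv_neq0.
have <- : vscale mu u = unitv K k.
  by rewrite -(AB _ (fin_supp_unitv _ k)) Bk linZ //; apply: fin_supp_unitv.
by rewrite vscaleK.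
Qed.

End Linear.

Section Bases.
Variables (K : comNzSemiRingType) (I : Type).
Notation e := (@unitv K I).

Lemma supported_on_unitv (J : Type) (x : J) : supported_on (unitv K x) [:: x].
Proof.
split=> [|y yx]; first by constructor; [case | constructor].
by apply: unitv_ne => xy; apply: yx; left.
Qed.

Section Lincomb.
Variables (J : Type) (b : J -> I -> K).

Lemma lincomb_nil c : lincomb nil c b = vzero. Proof. by []. Qed.
Lemma lincomb_cons x s c :
  lincomb (x :: s) c b = vadd (vscale (c x) (b x)) (lincomb s c b).
Proof. by []. Qed.

Lemma eq_lincomb s c d :
  (forall j, List.In j s -> c j = d j) -> lincomb s c b = lincomb s d b.
Proof.
elim: s => [|x s IH] cd //; rewrite !lincomb_cons IH => [|j js]; last by apply: cd; right.
by rewrite cd //; left.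
Qed.

Lemma lincomb0 s c : (forall j, List.In j s -> c j = 0) -> lincomb s c b = vzero.
Proof.
move=> c0; rewrite (eq_lincomb (d := vzero)) //.
by elim: s {c0} => //= x s ->; rewrite vscale0 vaddr0.
Qed.

Lemma lincombD s c d : lincomb s (vadd c d) b = vadd (lincomb s c b) (lincomb s d b).
Proof.
elim: s => [|x s IH]; first by rewrite !lincomb_nil vaddr0.
rewrite !lincomb_cons IH; apply: functional_extensionality => k.
by rewrite /vadd /vscale mulrDl addrACA.
Qed.

Lemma lincomb_unitv_coef s x a : List.NoDup s -> List.In x s ->
  lincomb s (vscale a (unitv K x)) b = vscale a (b x).
Proof.
elim: s => // y s IH /List.NoDup_cons_iff [ys nds] [<-|xs]; rewrite lincomb_cons.
  rewrite lincomb0 => [|j js]; first by rewrite /vscale unitv_id mulr1 vaddr0.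
  by rewrite /vscale unitv_ne ?mulr0 // => jy; apply: ys; rewrite -jy.
have -> : vscale a (unitv K x) y = 0.
  by rewrite /vscale unitv_ne ?mulr0 // => yx; apply: ys; rewrite yx.
by rewrite IH // vscale0 vadd0r.
Qed.

Lemma lincomb_eq0_summand s c m : zero_sum_free K ->
  lincomb s c b m = 0 -> forall j, List.In j s -> c j * b j m = 0.
Proof.
move=> HKz; elim: s => // x s IH; rewrite lincomb_cons /vadd /vscale.
by move=> /HKz [cx0 /IH s0] j [<-|/s0].
Qed.

Lemma lincomb_add_term s (c : J -> K) (x : J) a : supported_on c s ->
  exists s', supported_on (vadd c (vscale a (unitv K x))) s' /\
    lincomb s' (vadd c (vscale a (unitv K x))) b = vadd (lincomb s c b) (vscale a (b x)).
Proof.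
move=> [nds cs]; have [xs|xs] := pdec (List.In x s).
  exists s; split; last by rewrite lincombD lincomb_unitv_coef.
  split=> // y ys; rewrite /vadd /vscale cs // unitv_ne ?mulr0 ?addr0 // => yx.
  by apply: ys; rewrite yx.
exists (x :: s); split.
  split; first exact: List.NoDup_cons.
  move=> y /List.not_in_cons [yx ys].
  by rewrite /vadd /vscale cs // unitv_ne ?mulr0 ?addr0.
rewrite lincomb_cons (eq_lincomb (d := c)) => [|y ys]; last first.
  by rewrite /vadd /vscale unitv_ne ?mulr0 ?addr0 // => yx; apply: xs; rewrite -yx.
have -> : vadd c (vscale a (unitv K x)) x = a.
  by rewrite /vadd /vscale cs // unitv_id mulr1 add0r.
by apply: functional_extensionality => k; rewrite /vadd addrC.
Qed.

End Lincomb.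

Lemma lincomb_unitv s c : supported_on c s -> lincomb s c e = c.
Proof.
elim: s c => [|x s IH] c [nds cs].
  by apply: functional_extensionality => k; rewrite lincomb_nil cs.
move: nds => /List.NoDup_cons_iff [xs nds].
have ers : supported_on (erase c x) s.
  split=> // y ys; rewrite /erase; destruct (pdec (y = x)) as [|yx] => //=.
  by apply: cs => -[xy|//]; apply: yx.
rewrite lincomb_cons (@eq_lincomb _ e s c (erase c x)) ?IH -?vec_decomp // => y ys.
by rewrite /erase; destruct (pdec (y = x)) as [yx|] => //=; rewrite yx in ys.
Qed.

Lemma basis_unitv : is_basis e.
Proof.
split; first exact: fin_supp_unitv.
split=> [f [s fs]|c s c' s' sc sc' E j].
  pose s' := List.nodup (fun x y => pdec (x = y)) s.
  have sf : supported_on f s'.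
    split=> [|j js']; first exact: List.NoDup_nodup.
    by apply: fs => js; apply: js'; apply/List.nodup_In.
  by exists f, s'; rewrite lincomb_unitv.
by rewrite -(lincomb_unitv sc) E lincomb_unitv.
Qed.

Lemma in_some_basis_unitv i : in_some_basis (e i).
Proof. by exists I, e, i; split=> //; apply: basis_unitv. Qed.

Section BasisVectors.
Hypotheses (HK : semifield K) (HKz : zero_sum_free K).
Variables (J : Type) (b : J -> I -> K).
Hypothesis basis_b : is_basis b.

Lemma lincomb_unitv1 x : lincomb [:: x] (unitv K x) b = b x.
Proof. by rewrite lincomb_cons unitv_id vscale1 vaddr0. Qed.

Lemma basis_vec_neq0 x : b x <> vzero.
Proof.
case: basis_b => _ [_ uniq] bx0.
have s0 : supported_on (@vzero K J) nil by split=> //; constructor.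
have E : lincomb [:: x] (unitv K x) b = lincomb nil vzero b by rewrite lincomb_unitv1 bx0.
move: (uniq _ _ _ _ (supported_on_unitv x) s0 E x).
by rewrite unitv_id => /eqP; rewrite oner_eq0.
Qed.

Lemma basis_vec_at k : exists x mu, mu != 0 /\ b x = vscale mu (e k).
Proof.
case: basis_b => _ [span _].
have [c [s [[nds cs] Ek]]] := span _ (fin_supp_unitv K k).
have [x [xs cx]] : exists x, List.In x s /\ c x != 0.
  apply: NNPP => nx; apply: (@unitv_neq0 K I k); rewrite Ek; apply: lincomb0 => x xs.
  by case: (eqVneq (c x) 0) => // cx; case: nx; exists x.
have bxk : b x = vscale (b x k) (e k).
  apply: vec_supp1 => m mk.
  have /(lincomb_eq0_summand HKz) /(_ x xs) : lincomb s c b m = 0 by rewrite -Ek unitv_ne.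
  by case/(sf_mul_eq0 HK) => [cx0|//]; move: cx; rewrite cx0 eqxx.
exists x, (b x k); split=> //; apply/eqP => bxk0.
by apply: (@basis_vec_neq0 x); rewrite bxk bxk0 vscale0.
Qed.

(* If [x <> y], writing [b x] as (the rest of [b x]) + [b x k / mu] [b y] would
   expand [b x] with a nonzero coefficient at [y]. *)
Lemma basis_vec_monomial x : monomial (b x).
Proof.
have [k bxk] := vec_neq0 (@basis_vec_neq0 x).
have [y [mu [mu0 Ey]]] := basis_vec_at k.
suff xy : x = y by exists k, mu; rewrite xy.
apply: NNPP => xy; case: basis_b => fs_b [span uniq].
have [c [s [sc Ec]]] := span _ (fin_supp_erase k (fs_b x)).
pose a := b x k * kinv mu.
have a0 : a != 0 by apply: sf_mulf_neq0 => //; apply: kinv_neq0.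
have [s' [sc' Ec']] := lincomb_add_term b y a sc.
have E : lincomb s' (vadd c (vscale a (unitv K y))) b = lincomb [:: x] (unitv K x) b.
  rewrite Ec' -Ec Ey vscaleA /a -mulrA mulkinv_r // mulr1 lincomb_unitv1.
  rewrite [in RHS](vec_decomp (b x) k).
  by apply: functional_extensionality => m; rewrite /vadd addrC.
move: (uniq _ _ _ _ sc' (supported_on_unitv x) E y).
rewrite /vadd /vscale unitv_id mulr1 unitv_ne => [/HKz [_ a_eq0]|yx]; last by apply: xy.
by move: a0; rewrite a_eq0 eqxx.
Qed.

End BasisVectors.

Lemma in_some_basis_monomial (v : I -> K) :
  semifield K -> zero_sum_free K -> in_some_basis v -> monomial v.
Proof. by move=> HK HKz [J [b [j [basis_b <-]]]]; apply: basis_vec_monomial. Qed.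

End Bases.

(** * Monomial representations *)

Section Representations.
Variables (G : Type) (mul : G -> G -> G) (one : G) (inv : G -> G).
Hypothesis HG : is_group mul one inv.
Variable K : comNzSemiRingType.
Hypotheses (HK : semifield K) (HKz : zero_sum_free K).

Lemma mulgA x y z : mul x (mul y z) = mul (mul x y) z. Proof. by case: HG. Qed.
Lemma mul1g x : mul one x = x. Proof. by case: HG. Qed.
Lemma mulVg x : mul (inv x) x = one. Proof. by case: HG. Qed.
Lemma mulgV x : mul x (inv x) = one.
Proof.
by rewrite -[mul x _]mul1g -{1}(mulVg (inv x)) -mulgA (mulgA (inv x)) mulVg mul1g mulVg.
Qed.
Lemma mulg1 x : mul x one = x. Proof. by rewrite -(mulVg x) mulgA mulgV mul1g. Qed.
Lemma mulKg x y : mul (inv x) (mul x y) = y. Proof. by rewrite mulgA mulVg mul1g. Qed.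
Lemma mulKVg x y : mul x (mul (inv x) y) = y. Proof. by rewrite mulgA mulgV mul1g. Qed.
Lemma invgK x : inv (inv x) = x. Proof. by rewrite -{2}(mulKg (inv x) x) mulVg mulg1. Qed.
Lemma invg1 : inv one = one. Proof. by rewrite -(mulg1 (inv one)) mulVg. Qed.
Lemma invMg x y : inv (mul x y) = mul (inv y) (inv x).
Proof.
have E : mul (mul x y) (mul (inv y) (inv x)) = one by rewrite -mulgA mulKVg mulgV.
by rewrite -[LHS]mulg1 -E mulKg.
Qed.

Notation rep := (rep K mul one).

Section Rep.
Variable V : rep.
Notation I := (rI V).
Notation rho := (ract V).
Notation e := (@unitv K I).
Implicit Types f v : I -> K.

Lemma ract_lin g : is_linear (rho g). Proof. by case: (ractP V). Qed.
Lemma ract1 f : fin_supp f -> rho one f = f.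
Proof. by case: (ractP V) => _ H _; apply: H. Qed.
Lemma ractM g h f : fin_supp f -> rho (mul g h) f = rho g (rho h f).
Proof. by case: (ractP V) => _ _ H; apply: H. Qed.
Lemma ract_fin_supp g f : fin_supp f -> fin_supp (rho g f).
Proof. exact: (lin_fin_supp (ract_lin g)). Qed.
Lemma ractZ g c f : fin_supp f -> rho g (vscale c f) = vscale c (rho g f).
Proof. exact: (linZ (ract_lin g)). Qed.
Lemma ract0 g : rho g vzero = vzero. Proof. exact: lin0 (ract_lin g). Qed.
Lemma ractK g f : fin_supp f -> rho (inv g) (rho g f) = f.
Proof. by move=> fs; rewrite -ractM // mulVg ract1. Qed.
Lemma ractVK g f : fin_supp f -> rho g (rho (inv g) f) = f.
Proof. by move=> fs; rewrite -ractM // mulgV ract1. Qed.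

Lemma ract_neq0 g f : fin_supp f -> f <> vzero -> rho g f <> vzero.
Proof. by move=> fs f0 rf0; apply: f0; rewrite -(ractK g fs) rf0 ract0. Qed.

Lemma ract_monomial g v : monomial v -> monomial (rho g v).
Proof.
apply: (lin_iso_monomial HK HKz (ract_lin g) (ract_lin (inv g))) => f fs.
  exact: ractK.
exact: ractVK.
Qed.

Lemma ract_unitv g i : monomial (rho g (e i)).
Proof. exact/ract_monomial/monomial_unitv. Qed.

Lemma ract_scale_unitv g i j a c :
  rho g (e i) = vscale c (e j) -> rho g (vscale a (e i)) = vscale (a * c) (e j).
Proof. by move=> E; rewrite ractZ ?E ?vscaleA //; apply: fin_supp_unitv. Qed.

Definition line_stab v : G -> Prop := fun g => exists c, rho g v = vscale c v.
Definition line_char v : G -> K :=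
  fun g => epsilon (inhabits 0) (fun c => rho g v = vscale c v).
Definition line_pair v := (line_stab v, line_char v).

Lemma line_charP v g : line_stab v g -> rho g v = vscale (line_char v g) v.
Proof. exact: epsilon_spec. Qed.

Lemma line_char_eq v g c : monomial v -> rho g v = vscale c v -> line_char v g = c.
Proof.
move=> mv E; apply: (scale_inj HK (monomial_neq0 mv)).
by rewrite -line_charP //; exists c.
Qed.

Lemma line_scalar_neq0 v g c : monomial v -> rho g v = vscale c v -> c != 0.
Proof.
move=> mv E; apply/eqP => c0.
have := @ract_neq0 g v (monomial_fin_supp mv) (monomial_neq0 mv).
by rewrite E c0 vscale0.
Qed.

Lemma line_pair_valid v : monomial v -> chpair_valid mul one inv (line_pair v).
Proof.
move=> mv; have fs := monomial_fin_supp mv.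
split; [split; [|split]|split] => /=.
- by exists 1; rewrite ract1 // vscale1.
- move=> x y [c Ec] [d Ed]; exists (d * c).
  by rewrite ractM // Ed ractZ // Ec vscaleA.
- move=> x [c Ec]; exists (kinv c); have fs_xv := ract_fin_supp x fs.
  by rewrite -{1}(vscaleK v HK (line_scalar_neq0 mv Ec)) -Ec ractZ // ractK.
- by move=> h /line_charP; apply: line_scalar_neq0.
- move=> h k /line_charP Eh /line_charP Ek; apply: line_char_eq => //.
  by rewrite ractM // Ek ractZ // Eh vscaleA mulrC.
Qed.

(** * Indecomposability is transitivity on coordinate lines *)

Definition linked (i k : I) := exists g c, c != 0 /\ rho g (e i) = vscale c (e k).
Definition transitive_rep := forall i k, linked i k.

Lemma linked_refl i : linked i i.
Proof. by exists one, 1; rewrite oner_eq0 ract1 ?vscale1 //; apply: fin_supp_unitv. Qed.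

Lemma linked_trans i j k : linked i j -> linked j k -> linked i k.
Proof.
move=> [g [c [c0 Eg]]] [h [d [d0 Eh]]]; exists (mul h g), (c * d).
by rewrite sf_mulf_neq0 // ractM ?Eg ?(ract_scale_unitv c Eh) //; apply: fin_supp_unitv.
Qed.

Lemma linked_sym i k : linked i k -> linked k i.
Proof.
move=> [g [c [c0 Eg]]]; exists (inv g), (kinv c); rewrite kinv_neq0 //; split=> //.
rewrite -(ractK g (fin_supp_unitv K i)) Eg ractZ ?vscaleK //; exact: fin_supp_unitv.
Qed.

Lemma linked_coord x i k : rho x (e i) k != 0 -> linked i k.
Proof.
have [j [d [d0 Ex]]] := ract_unitv x i; rewrite Ex => xik.
by rewrite (scale_unitv_coord xik); exists x, d.
Qed.

Lemma ract_coord_linked x f k : fin_supp f -> rho x f k != 0 ->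
  exists2 m, f m != 0 & linked m k.
Proof.
move: f; apply: fin_supp_ind => [|c i f fs IH]; first by rewrite ract0 eqxx.
have fs_ci : fin_supp (vscale c (e i)) by apply/fin_supp_scale/fin_supp_unitv.
rewrite (linD (ract_lin x)) // (ractZ x c (fin_supp_unitv K i)) /vadd {1}/vscale.
have zsf_neq0 (a b : K) : b != 0 -> a + b != 0.
  by move=> b0; apply: contraNneq b0 => /HKz [_ ->].
case: (eqVneq (rho x f k) 0) => [-> | /IH [m fm mk] _].
  rewrite addr0 => cxik; exists i; last first.
    by apply: (@linked_coord x); apply: contraNneq cxik => ->; rewrite mulr0.
  rewrite /vscale unitv_id mulr1 addrC zsf_neq0 //.
  by apply: contraNneq cxik => ->; rewrite mul0r.
by exists m => //; apply: zsf_neq0.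
Qed.

Definition supp_in (P : I -> Prop) f := fin_supp f /\ forall k, f k != 0 -> P k.

Lemma supp_in_out P f k : supp_in P f -> ~ P k -> f k = 0.
Proof. by move=> [_ Pf] nPk; case: (eqVneq (f k) 0) => // /Pf /nPk. Qed.

Lemma supp_in_unitv (P : I -> Prop) i : P i -> supp_in P (e i).
Proof.
move=> Pi; split=> [|k eik]; first exact: fin_supp_unitv.
by destruct (pdec (k = i)) as [->|ki] => //; move: eik; rewrite unitv_ne ?eqxx.
Qed.

Lemma submodule_supp_in P : submodule (supp_in P).
Proof.
split; [by move=> f [] | split; [|split]].
- by split=> [|k]; [exact: fin_supp0 | rewrite /vzero eqxx].
- move=> f g [fs Pf] [gs Pg]; split=> [|k]; first exact: fin_supp_add.
  by rewrite /vadd; case: (eqVneq (f k) 0) => [->|/Pf //]; rewrite add0r; apply: Pg.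
- move=> c f [fs Pf]; split=> [|k]; first exact: fin_supp_scale.
  by rewrite /vscale; case: (eqVneq (f k) 0) => [->|/Pf //]; rewrite mulr0 eqxx.
Qed.

Lemma G_stable_supp_in P :
  (forall i k, P i -> linked i k -> P k) -> G_stable V (supp_in P).
Proof.
move=> Plinked x f [fs Pf]; split=> [|k]; first exact: ract_fin_supp.
by move=> /(ract_coord_linked fs) [m /Pf]; apply: Plinked.
Qed.

Definition restrict (P : I -> Prop) f : I -> K := fun k => if pdec (P k) then f k else 0.

Lemma direct_sum_supp_in P : direct_sum (supp_in P) (supp_in (fun k => ~ P k)).
Proof.
move=> f [s fs]; have supp_restrict Q : supp_in Q (restrict Q f).
  split=> [|k]; last by rewrite /restrict; destruct (pdec (Q k)); rewrite //= eqxx.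
  by exists s => k ks; rewrite /restrict; destruct (pdec (Q k)); rewrite //= fs.
exists (restrict P f, restrict (fun k => ~ P k) f); split.
  do 2 (split; first exact: supp_restrict).
  apply: functional_extensionality => k; rewrite /vadd /restrict /=.
  by destruct (pdec (P k)) as [Pk|Pk], (pdec (~ P k)) as [nPk|nPk];
    rewrite /= ?addr0 ?add0r //; case: (nPk Pk).
move=> [u w] /= [Pu [Pw E]]; congr pair; apply: functional_extensionality => k;
  rewrite /restrict E /vadd /=.
- destruct (pdec (P k)) as [Pk|Pk] => /=; last by rewrite (supp_in_out Pu).
  by rewrite (supp_in_out Pw) ?addr0 // => /(_ Pk).
- destruct (pdec (~ P k)) as [Pk|Pk] => /=; last by rewrite (supp_in_out Pw).
  by rewrite (supp_in_out Pu) ?add0r.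
Qed.

Lemma indecomposable_transitive : indecomposable V -> transitive_rep.
Proof.
move=> [[f0 [_ /vec_neq0 [i0 _]]] no_split].
suff linked_i0 k : linked i0 k.
  by move=> i k; apply: linked_trans (linked_sym (linked_i0 i)) (linked_i0 k).
apply: NNPP => nk; apply: no_split.
exists (supp_in (linked i0)), (supp_in (fun k => ~ linked i0 k)).
split; first exact: submodule_supp_in.
split; first exact: submodule_supp_in.
split; first by apply: G_stable_supp_in => i j; apply: linked_trans.
split.
  apply: G_stable_supp_in => i j ni ij i0j.
  by apply: ni; apply: linked_trans i0j (linked_sym ij).
split.
  by exists (e i0); split; [apply/supp_in_unitv/linked_refl | apply: unitv_neq0].
split; first by exists (e k); split; [apply: supp_in_unitv | apply: unitv_neq0].
exact: direct_sum_supp_in.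
Qed.

Lemma direct_sum_inter0 U W f : submodule U -> submodule W -> direct_sum U W ->
  U f -> W f -> f = vzero.
Proof.
move=> [fsU [U0 _]] [_ [W0 _]] UW Uf Wf.
have [[u w] [_ uniq]] := UW f (fsU f Uf).
have := uniq (f, vzero) (conj Uf (conj W0 (esym (vaddr0 f)))).
by rewrite (uniq (vzero, f) (conj U0 (conj Wf (esym (vadd0r f))))) => -[->].
Qed.

Lemma direct_sum_unitv U W i : submodule U -> direct_sum U W -> U (e i) \/ W (e i).
Proof.
move=> [_ [_ [_ U_scale]]] UW.
have [[u w] [[/= Uu [Ww Ei]] _]] := UW (e i) (fin_supp_unitv K i).
have Eu : u = vscale (u i) (e i).
  apply: vec_supp1 => k ki; move: (congr1 (fun f => f k) Ei) => /=.
  by rewrite /vadd unitv_ne // => /esym /HKz [].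
case: (eqVneq (u i) 0) => [ui0|ui0]; first by right; rewrite Ei Eu ui0 vscale0 vadd0r.
by left; rewrite -(vscaleK (e i) HK ui0) -Eu; apply: U_scale.
Qed.

Lemma transitive_submodule_full X i : transitive_rep -> submodule X -> G_stable V X ->
  X (e i) -> forall f, fin_supp f -> X f.
Proof.
move=> trans [_ [X0 [X_add X_scale]]] X_stable Xi.
have Xe k : X (e k).
  have [g [c [c0 E]]] := trans i k.
  by rewrite -(vscaleK (e k) HK c0) -E; apply/X_scale/X_stable.
by apply: fin_supp_ind => // c k f _ Xf; apply/X_add/Xf/X_scale.
Qed.

Lemma transitive_indecomposable (i : I) : transitive_rep -> indecomposable V.
Proof.
move=> trans; split.
  by exists (e i); split; [apply: fin_supp_unitv | apply: unitv_neq0].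
move=> [U [W [smU [smW [stU [stW [[u [Uu u0]] [[w [Ww w0]] UW]]]]]]]].
have [fsU _] := smU; have [fsW _] := smW.
have [Ui|Wi] := direct_sum_unitv i smU UW.
  have Uw := transitive_submodule_full trans smU stU Ui (fsW w Ww).
  exact: w0 (direct_sum_inter0 smU smW UW Uw Ww).
have Wu := transitive_submodule_full trans smW stW Wi (fsU u Uu).
exact: u0 (direct_sum_inter0 smU smW UW Uu Wu).
Qed.

Lemma transitive_orbit_unitv v : transitive_rep -> monomial v ->
  forall i, exists g c, c != 0 /\ rho g v = vscale c (e i).
Proof.
move=> trans [i0 [a [a0 ->]]] i; have [g [c [c0 E]]] := trans i0 i.
by exists g, (a * c); rewrite sf_mulf_neq0 // (ract_scale_unitv a E).
Qed.

Lemma ractV_scale g c f u : fin_supp f -> fin_supp u -> c != 0 ->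
  rho g f = vscale c u -> rho (inv g) u = vscale (kinv c) f.
Proof.
move=> fs us c0 E.
by rewrite -(ractK g fs) E ractZ // ?vscaleK //; apply: ract_fin_supp; apply: fin_supp_scale.
Qed.

Lemma lin_eq_on_orbit J (A B : (I -> K) -> (J -> K)) v :
  transitive_rep -> monomial v -> is_linear A -> is_linear B ->
  (forall g, A (rho g v) = B (rho g v)) -> forall f, fin_supp f -> A f = B f.
Proof.
move=> trans mv linA linB AB; apply: lin_eq_unitv => // i.
have [g [c [c0 E]]] := transitive_orbit_unitv trans mv i.
have fs_gv := ract_fin_supp g (monomial_fin_supp mv).
by rewrite -(vscaleK (e i) HK c0) -E (linZ linA) // (linZ linB) // AB.
Qed.

End Rep.

Lemma line_pair_eq_of_iso (V W : rep) phi v w :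
  rep_iso_map V W phi -> phi v = w -> monomial v -> chpair_eq (line_pair v) (line_pair w).
Proof.
move=> [lin_phi [[psi [lin_psi [psi_phi phi_psi]]] equiv]] <- mv.
have fs := monomial_fin_supp mv.
have fs_phi : fin_supp (phi v) by apply: (lin_fin_supp lin_phi).
have lines g c : ract V g v = vscale c v <-> ract W g (phi v) = vscale c (phi v).
  split=> E; first by rewrite -equiv // E (linZ lin_phi).
  by rewrite -(psi_phi _ (ract_fin_supp g fs)) equiv // E (linZ lin_psi) // psi_phi.
have mphi := lin_iso_monomial HK HKz lin_phi lin_psi psi_phi phi_psi mv.
split=> g /=; first by split=> -[c /lines E]; exists c.
by move=> /line_charP /lines /(line_char_eq mphi).
Qed.

(** * A transitive representation is determined by a line pair *)

Section Intertwiner.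
Variables (V W : rep) (v : rI V -> K) (w : rI W -> K).
Hypotheses (mono_v : monomial v) (mono_w : monomial w) (trans_V : transitive_rep V).
Hypothesis same_lines : forall h c, ract V h v = vscale c v <-> ract W h w = vscale c w.
Notation rho := (ract V).
Notation tau := (ract W).
Notation eV := (@unitv K (rI V)).

Let fs_v := monomial_fin_supp mono_v.
Let fs_w := monomial_fin_supp mono_w.

Let orbit_point (i : rI V) (p : G * K) := p.2 != 0 /\ rho p.1 v = vscale p.2 (eV i).
Let g_lam i : G * K := epsilon (inhabits (one, 0)) (orbit_point i).
Let ga i := (g_lam i).1.
Let lam i := (g_lam i).2.

Let g_lamP i : lam i != 0 /\ rho (ga i) v = vscale (lam i) (eV i).
Proof.
apply: (epsilon_spec _ (orbit_point i)).
by have [g [c [c0 E]]] := transitive_orbit_unitv trans_V mono_v i; exists (g, c).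
Qed.

Let inhV : inhabited (rI V). Proof. by case: mono_v => i _; exists. Qed.

(* [phi] sends [e_i] to [tau (ga i) w / lam i].  These images have pairwise
   distinct supports, so [phi] is defined coordinatewise through [src j], the
   unique [i] for which [tau (ga i) w] is supported at [j]. *)
Let src (j : rI W) : rI V := epsilon inhV (fun i => tau (ga i) w j != 0).

Let tau_coord_inj i i' j : tau (ga i) w j != 0 -> tau (ga i') w j != 0 -> i = i'.
Proof.
move=> tij ti'j.
have [j1 [k1 [k1_0 E1]]] := ract_monomial (ga i) mono_w.
have [j2 [k2 [k2_0 E2]]] := ract_monomial (ga i') mono_w.
have jj1 : j = j1 by apply: (scale_unitv_coord (c := k1)); rewrite -E1.
have jj2 : j = j2 by apply: (scale_unitv_coord (c := k2)); rewrite -E2.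
subst j1 j2.
have [lam0 Ei] := g_lamP i; have [lam0' Ei'] := g_lamP i'.
pose x := mul (inv (ga i)) (ga i').
have Tx : tau x w = vscale (k2 * kinv k1) w.
  rewrite ractM // E2 (ractZ _ _ (fin_supp_unitv K j)).
  by rewrite (ractV_scale fs_w (fin_supp_unitv K j) k1_0 E1) vscaleA mulrC.
have : rho (ga i') v = rho (ga i) (rho x v) by rewrite -ractM // mulKVg.
rewrite Ei' (proj2 (same_lines _ _) Tx) ractZ // Ei vscaleA.
by move=> /(scale_unitv_inj lam0') [].
Qed.

Let phi (f : rI V -> K) : rI W -> K :=
  fun j => f (src j) * (tau (ga (src j)) w j * kinv (lam (src j))).

Let phiD f g : phi (vadd f g) = vadd (phi f) (phi g).
Proof. by apply: functional_extensionality => j; rewrite /phi /vadd /= mulrDl. Qed.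

Let phiZ c f : phi (vscale c f) = vscale c (phi f).
Proof. by apply: functional_extensionality => j; rewrite /phi /vscale /= -mulrA. Qed.

Let phi_unitv i : phi (eV i) = vscale (kinv (lam i)) (tau (ga i) w).
Proof.
apply: functional_extensionality => j; rewrite /phi /vscale.
destruct (pdec (src j = i)) as [->|ji]; first by rewrite unitv_id mul1r mulrC.
rewrite unitv_ne // mul0r.
case: (eqVneq (tau (ga i) w j) 0) => [->|tij]; first by rewrite mulr0.
have src_j : tau (ga (src j)) w j != 0.
  by apply: (epsilon_spec inhV (fun i => tau (ga i) w j != 0)); exists i.
by case: (ji (tau_coord_inj src_j tij)).
Qed.

Let phi_lin : is_linear phi.
Proof.
split; last by split=> [f g _ _|c f _]; [apply: phiD | apply: phiZ].
apply: fin_supp_ind => [|c i f _ fs_phi].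
  by exists nil => j _; rewrite /phi /vzero mul0r.
rewrite phiD phiZ phi_unitv; apply: fin_supp_add => //.
by do 2 apply: fin_supp_scale; apply: ract_fin_supp.
Qed.

Let phi_orbit x : phi (rho x v) = tau x w.
Proof.
have [i [d [d0 Ex]]] := ract_monomial x mono_v.
have [lam0 Ei] := g_lamP i.
pose h := mul (inv (ga i)) x.
have Rh : rho h v = vscale (d * kinv (lam i)) v.
  rewrite ractM // Ex (ractZ _ _ (fin_supp_unitv K i)).
  by rewrite (ractV_scale fs_v (fin_supp_unitv K i) lam0 Ei) vscaleA.
have -> : x = mul (ga i) h by rewrite mulKVg.
rewrite ractM // Rh ractZ // Ei vscaleA phiZ phi_unitv vscaleA.
rewrite ractM // (proj1 (same_lines _ _) Rh) ractZ //.
by rewrite -(mulrA d) mulkinv_r // mulr1.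
Qed.

Lemma intertwiner_exists : exists phi, is_linear phi /\ phi v = w /\
  forall g f, fin_supp f -> phi (rho g f) = tau g (phi f).
Proof.
exists phi; split; first exact: phi_lin.
split; first by rewrite -(ract1 fs_v) phi_orbit ract1.
move=> g; apply: (lin_eq_on_orbit trans_V mono_v).
- by apply: lin_comp => //; apply: ract_lin.
- by apply: lin_comp => //; apply: ract_lin.
by move=> x /=; rewrite -ractM // !phi_orbit ractM.
Qed.

End Intertwiner.

Lemma same_lines_of_line_pair_eq (V W : rep) v w : monomial v -> monomial w ->
  chpair_eq (line_pair v) (line_pair w) ->
  forall h c, ract V h v = vscale c v <-> ract W h w = vscale c w.
Proof.
move=> mv mw [stab_eq char_eq] h c.
have stab_vw : line_stab v h <-> line_stab w h := stab_eq h.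
have char_vw S : line_char v h = line_char w h := char_eq h S.
split=> E.
  have Sv : line_stab v h by exists c.
  by rewrite (line_charP (stab_vw.1 Sv)) -(char_vw Sv) (line_char_eq mv E).
have Sv : line_stab v h by apply/stab_vw; exists c.
by rewrite (line_charP Sv) (char_vw Sv) (line_char_eq mw E).
Qed.

Lemma pair_iso_of_line_pair_eq (V W : rep) v w :
  transitive_rep V -> transitive_rep W -> monomial v -> monomial w ->
  chpair_eq (line_pair v) (line_pair w) -> pair_iso V v W w.
Proof.
move=> tV tW mv mw E; have lines := same_lines_of_line_pair_eq mv mw E.
have lines' h c := iff_sym (lines h c).
have [phi [lin_phi [phi_v phi_eq]]] := intertwiner_exists mv mw tV lines.
have [psi [lin_psi [psi_w psi_eq]]] := intertwiner_exists mw mv tW lines'.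
have fs_v := monomial_fin_supp mv; have fs_w := monomial_fin_supp mw.
exists phi; split=> //; split=> //; split=> //.
exists psi; split=> //; split.
  apply: (lin_eq_on_orbit tV mv (lin_comp lin_phi lin_psi) (lin_id _ _)) => g /=.
  by rewrite phi_eq // phi_v psi_eq // psi_w.
apply: (lin_eq_on_orbit tW mw (lin_comp lin_psi lin_phi) (lin_id _ _)) => g /=.
by rewrite psi_eq // psi_w phi_eq // phi_v.
Qed.

Implicit Types p q : (G -> Prop) * (G -> K).

Definition conj_by p q g :=
  (forall x, q.1 x <-> p.1 (mul (inv g) (mul x g))) /\
  (forall h, q.1 h -> q.2 h = p.2 (mul (inv g) (mul h g))).

Lemma chpair_eq_conj p p' q :
  chpair_eq p p' -> chpair_conj mul inv p' q -> chpair_conj mul inv p q.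
Proof.
move=> [E1 E2] [g [C1 C2]]; exists g; split=> [x|h qh]; first by rewrite C1 E1.
by rewrite C2 // E2 //; apply/E1/C1.
Qed.

Lemma chpair_conj_eq p q q' :
  chpair_conj mul inv p q -> chpair_eq q q' -> chpair_conj mul inv p q'.
Proof.
move=> [g [C1 C2]] [E1 E2]; exists g; split=> [x|h /E1 qh]; first by rewrite -E1 C1.
by rewrite -E2 // C2.
Qed.

Lemma conj_by_unique p q q' g : conj_by p q g -> conj_by p q' g -> chpair_eq q q'.
Proof.
move=> [C1 C2] [C1' C2']; split=> [x|h qh]; first by rewrite C1 C1'.
by rewrite C2 // C2' //; apply/C1'/C1.
Qed.

Lemma ract_conj (V : rep) x g f : fin_supp f ->
  ract V x (ract V g f) = ract V g (ract V (mul (inv g) (mul x g)) f).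
Proof. by move=> fs; rewrite -!ractM // mulKVg. Qed.

Lemma line_pair_conj (V : rep) u g c : monomial u -> c != 0 ->
  conj_by (line_pair u) (line_pair (vscale c (ract V g u))) g.
Proof.
move=> mu c0; have fs := monomial_fin_supp mu.
set u' := vscale c (ract V g u).
have lines x d : ract V x u' = vscale d u' <->
                 ract V (mul (inv g) (mul x g)) u = vscale d u.
  set y := mul (inv g) (mul x g); have fs_yu := ract_fin_supp y fs.
  have -> : ract V x u' = vscale c (ract V g (ract V y u)).
    by rewrite ractZ; [rewrite (ract_conj x g fs) | apply: ract_fin_supp].
  have -> : vscale d u' = vscale c (ract V g (vscale d u)).
    by rewrite ractZ // !vscaleA mulrC.
  split=> [E|->] //.
  rewrite -(ractK g fs_yu) -(vscaleK (ract V g (ract V y u)) HK c0) E vscaleK // ractK //.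
  exact: fin_supp_scale.
split=> x /=; first by split=> -[d /lines E]; exists d.
by move=> /line_charP /lines /(line_char_eq mu) ->.
Qed.

Lemma transitive_line_pair_conj (V : rep) (u u' : rI V -> K) : transitive_rep V ->
  monomial u -> monomial u' -> chpair_conj mul inv (line_pair u) (line_pair u').
Proof.
move=> tV mu [k [b [b0 ->]]].
have [g [c [c0 E]]] := transitive_orbit_unitv tV mu k.
have bc0 : b * kinv c != 0 by apply: sf_mulf_neq0 => //; apply: kinv_neq0.
exists g; have := line_pair_conj g mu bc0.
by rewrite E vscaleA -mulrA mulkinv_r // mulr1.
Qed.

Lemma rep_iso_line_pair_conj (V W : rep) (v : rI V -> K) (w : rI W -> K) :
  indecomposable V -> indecomposable W -> monomial v -> monomial w ->
  rep_iso V W <-> chpair_conj mul inv (line_pair v) (line_pair w).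
Proof.
move=> /indecomposable_transitive tV /indecomposable_transitive tW mv mw; split.
  move=> [phi iso]; have [lin_phi [[psi [lin_psi [psi_phi phi_psi]]] _]] := iso.
  have mphi := lin_iso_monomial HK HKz lin_phi lin_psi psi_phi phi_psi mv.
  apply: chpair_eq_conj (line_pair_eq_of_iso iso erefl mv) _.
  exact: transitive_line_pair_conj tW mphi mw.
move=> [g C]; have one0 : (1 : K) != 0 by rewrite oner_eq0.
have E := conj_by_unique (line_pair_conj g mv one0) C.
have mgv : monomial (vscale 1 (ract V g v)) by rewrite vscale1; apply: ract_monomial.
by have [phi [iso _]] := pair_iso_of_line_pair_eq tV tW mgv mw E; exists phi.
Qed.

(** * Induced representations *)

Section Induced.
Variables (H : G -> Prop) (chi : G -> K).
Hypothesis Hchi : chpair_valid mul one inv (H, chi).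

Let H1 : H one. Proof. by case: Hchi => [[]]. Qed.
Let HM x y : H x -> H y -> H (mul x y).
Proof. by case: Hchi => [[_ [HM _]] _]; apply: HM. Qed.
Let HV x : H x -> H (inv x). Proof. by case: Hchi => [[_ [_ HV]] _]; apply: HV. Qed.
Let chi_neq0 h : H h -> chi h != 0. Proof. by case: Hchi => _ [chi0 _]; apply: chi0. Qed.
Let chiM h k : H h -> H k -> chi (mul h k) = chi h * chi k.
Proof. by case: Hchi => _ [_ chiM]; apply: chiM. Qed.
Let chi1 : chi one = 1.
Proof.
have c0 := chi_neq0 H1; have E := chiM H1 H1; rewrite mulg1 in E.
by rewrite -(mulkinv_r HK c0) {3}E mulrA mulkinv_r // mul1r.
Qed.

Definition lcoset g : G -> Prop := fun z => H (mul (inv g) z).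
Definition coset_space := {S : G -> Prop | exists g, S = lcoset g}.
Definition coset_of g : coset_space := exist _ (lcoset g) (ex_intro _ g erefl).

Lemma coset_of_eq g g' : H (mul (inv g) g') -> coset_of g = coset_of g'.
Proof.
move=> Hgg'; apply: subset_eq_compat; apply: functional_extensionality => z.
apply: propositional_extensionality; rewrite /lcoset; split=> Hz.
  have -> : mul (inv g') z = mul (inv (mul (inv g) g')) (mul (inv g) z).
    by rewrite invMg invgK -mulgA mulKVg.
  exact/HM/Hz/HV.
by rewrite -(mulKVg g' z) mulgA; apply: HM.
Qed.

Lemma coset_of_inj g g' : coset_of g = coset_of g' -> H (mul (inv g) g').
Proof. by move/(congr1 (fun S => proj1_sig S g')); rewrite /= /lcoset mulVg => ->. Qed.

Definition coset_rep (S : coset_space) : G := epsilon (inhabits one) (fun g => coset_of g = S).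

Lemma coset_repK S : coset_of (coset_rep S) = S.
Proof.
apply: (epsilon_spec _ (fun g => coset_of g = S)).
by case: S => P [g Pg]; exists g; apply: subset_eq_compat; rewrite Pg.
Qed.

Lemma coset_rep_in g : H (mul (inv g) (coset_rep (coset_of g))).
Proof. by apply: coset_of_inj; rewrite coset_repK. Qed.

Definition coset_act x S := coset_of (mul x (coset_rep S)).

Lemma coset_act_of x g : coset_act x (coset_of g) = coset_of (mul x g).
Proof.
apply: coset_of_eq; rewrite invMg -mulgA mulKg.
by have := HV (coset_rep_in g); rewrite invMg invgK.
Qed.

Lemma coset_actM x y S : coset_act x (coset_act y S) = coset_act (mul x y) S.
Proof. by rewrite {2}/coset_act coset_act_of mulgA. Qed.
Lemma coset_act1 S : coset_act one S = S.
Proof. by rewrite /coset_act mul1g coset_repK. Qed.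
Lemma coset_actK x S : coset_act (inv x) (coset_act x S) = S.
Proof. by rewrite coset_actM mulVg coset_act1. Qed.
Lemma coset_actVK x S : coset_act x (coset_act (inv x) S) = S.
Proof. by rewrite coset_actM mulgV coset_act1. Qed.

(* With [r_S := coset_rep S], [x r_(x^-1 T) = r_T h] for some [h] in [H];
   the induced action scales the [T]-coordinate by [chi h]. *)
Definition ind_coef x T :=
  chi (mul (inv (coset_rep T)) (mul x (coset_rep (coset_act (inv x) T)))).

Lemma ind_coef_in x T :
  H (mul (inv (coset_rep T)) (mul x (coset_rep (coset_act (inv x) T)))).
Proof.
have := coset_rep_in (mul (inv x) (coset_rep T)).
by rewrite -coset_act_of coset_repK invMg invgK -mulgA.
Qed.

Definition ind_act x (f : coset_space -> K) : coset_space -> K :=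
  fun T => f (coset_act (inv x) T) * ind_coef x T.

Lemma ind_act_rep : is_rep K G mul one coset_space ind_act.
Proof.
split.
- move=> x; split; [|split].
  + move=> f [s fs]; exists (map (coset_act x) s) => T Ts; rewrite /ind_act fs ?mul0r //.
    by move=> Ts'; apply: Ts; rewrite -(coset_actVK x T); apply: List.in_map.
  + move=> f g _ _; apply: functional_extensionality => T.
    by rewrite /ind_act /vadd mulrDl.
  + move=> c f _; apply: functional_extensionality => T.
    by rewrite /ind_act /vscale mulrA.
- move=> f _; apply: functional_extensionality => T.
  by rewrite /ind_act /ind_coef invg1 coset_act1 mul1g mulVg chi1 mulr1.
- move=> x y f _; apply: functional_extensionality => T.
  rewrite /ind_act coset_actM -invMg -mulrA; congr (_ * _).
  rewrite /ind_coef mulrC -chiM; try exact: ind_coef_in.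
  rewrite coset_actM -invMg; congr chi.
  by symmetry; rewrite -mulgA -(mulgA x) mulKVg (mulgA x y).
Qed.

Definition induced_rep : rep := @Rep K G mul one coset_space ind_act ind_act_rep.

Lemma ind_act_unitv x S :
  ind_act x (unitv K S) = vscale (ind_coef x (coset_act x S)) (unitv K (coset_act x S)).
Proof.
apply: functional_extensionality => T; rewrite /ind_act /vscale.
destruct (pdec (T = coset_act x S)) as [->|TS].
  by rewrite coset_actK !unitv_id mul1r mulr1.
by rewrite !unitv_ne ?mul0r ?mulr0 // => E; apply: TS; rewrite -E coset_actVK.
Qed.

Lemma induced_transitive : transitive_rep induced_rep.
Proof.
move=> S T; set x := mul (coset_rep T) (inv (coset_rep S)).
have xST : coset_act x S = T.
  by rewrite -(coset_repK S) coset_act_of /x -mulgA mulVg mulg1 coset_repK.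
exists x, (ind_coef x T); split; first exact/chi_neq0/ind_coef_in.
by rewrite /= ind_act_unitv xST.
Qed.

Lemma induced_indecomposable : indecomposable induced_rep.
Proof. exact: (@transitive_indecomposable induced_rep (coset_of one) induced_transitive). Qed.

Lemma induced_line_pair :
  chpair_eq (@line_pair induced_rep (unitv K (coset_of one))) (H, chi).
Proof.
pose S0 := coset_of one; pose r0 := coset_rep S0.
have r0_in : H r0 by have := coset_rep_in one; rewrite invg1 mul1g.
have fix_S0 x : H x -> coset_act x S0 = S0.
  by move=> Hx; rewrite coset_act_of mulg1; apply: coset_of_eq; rewrite mulg1; apply: HV.
have act_S0 x : H x -> ind_act x (unitv K S0) = vscale (chi x) (unitv K S0).
  move=> Hx; rewrite ind_act_unitv fix_S0 // /ind_coef (fix_S0 _ (HV Hx)) -/r0.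
  have Hr0' := HV r0_in.
  rewrite (chiM Hr0' (HM Hx r0_in)) (chiM Hx r0_in) mulrCA -(chiM Hr0' r0_in).
  by rewrite mulVg chi1 mulr1.
have stab_H x : @line_stab induced_rep (unitv K S0) x -> H x.
  move=> [c]; rewrite /= ind_act_unitv.
  move=> /(scale_unitv_inj (chi_neq0 (ind_coef_in _ _))) [].
  by rewrite coset_act_of mulg1 => /esym /coset_of_inj; rewrite invg1 mul1g.
split=> x /=; first by split=> [/stab_H | Hx] //; exists (chi x); apply: act_S0.
move=> /stab_H Hx.
exact: (line_char_eq (V := induced_rep) (monomial_unitv _ S0) (act_S0 x Hx)).
Qed.

End Induced.

Definition some_basis_vec (V : rep) : rI V -> K :=
  epsilon (inhabits vzero) (@in_some_basis K (rI V)).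
Arguments some_basis_vec : clear implicits.

Lemma some_basis_vec_monomial (V : rep) : indecomposable V -> monomial (some_basis_vec V).
Proof.
move=> [[f [_ /vec_neq0 [i _]]] _]; apply: (in_some_basis_monomial HK HKz).
by apply: epsilon_spec; exists (unitv K i); apply: in_some_basis_unitv.
Qed.

Lemma classification_of_pairs :
  exists Phi : forall V : rep, (rI V -> K) -> (G -> Prop) * (G -> K),
     (forall V v, indecomposable V -> in_some_basis v -> chpair_valid mul one inv (Phi V v)) /\
     (forall V v W w, indecomposable V -> in_some_basis v ->
                      indecomposable W -> in_some_basis w ->
        (pair_iso V v W w <-> chpair_eq (Phi V v) (Phi W w))) /\
     (forall p, chpair_valid mul one inv p ->
        exists V v, indecomposable V /\ in_some_basis v /\ chpair_eq (Phi V v) p).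
Proof.
have monoP I (v : I -> K) := in_some_basis_monomial HK HKz (v := v).
exists (fun V v => line_pair v); split; [|split].
- by move=> V v _ /monoP; apply: line_pair_valid.
- move=> V v W w /indecomposable_transitive tV /monoP mv.
  move=> /indecomposable_transitive tW /monoP mw.
  split=> [[phi [iso phi_v]]|]; first exact: line_pair_eq_of_iso iso phi_v mv.
  exact: pair_iso_of_line_pair_eq.
- move=> [H chi] Hchi; exists (induced_rep Hchi), (unitv K (coset_of H one)).
  split; first exact: induced_indecomposable.
  by split; [apply: in_some_basis_unitv | apply: induced_line_pair].
Qed.

Lemma classification_of_indecomposables :
  exists Psi : rep -> (G -> Prop) * (G -> K),
     (forall V, indecomposable V -> chpair_valid mul one inv (Psi V)) /\
     (forall V W, indecomposable V -> indecomposable W ->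
        (rep_iso V W <-> chpair_conj mul inv (Psi V) (Psi W))) /\
     (forall p, chpair_valid mul one inv p ->
        exists V, indecomposable V /\ chpair_conj mul inv (Psi V) p).
Proof.
exists (fun V => line_pair (some_basis_vec V)); split; [|split].
- by move=> V /some_basis_vec_monomial; apply: line_pair_valid.
- move=> V W IV IW.
  have [mV mW] := (some_basis_vec_monomial IV, some_basis_vec_monomial IW).
  exact: rep_iso_line_pair_conj.
- move=> [H chi] Hchi; have IV := induced_indecomposable Hchi.
  exists (induced_rep Hchi); split=> //; apply: chpair_conj_eq (induced_line_pair Hchi).
  apply: transitive_line_pair_conj (some_basis_vec_monomial IV) (monomial_unitv _ _).
  exact: indecomposable_transitive.
Qed.

End Representations.

Theorem proposition3p13 (G : Type) (mul : G -> G -> G) (one : G) (inv : G -> G)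
  (HG : is_group mul one inv)
  (K : comNzSemiRingType) (HK : semifield K) (HKz : zero_sum_free K) :
  (* (1) *)
  (exists Phi : forall V : rep K mul one, (rI V -> K) -> (G -> Prop) * (G -> K),
     (forall V v, indecomposable V -> in_some_basis v -> chpair_valid mul one inv (Phi V v)) /\
     (forall V v W w, indecomposable V -> in_some_basis v ->
                      indecomposable W -> in_some_basis w ->
        (pair_iso V v W w <-> chpair_eq (Phi V v) (Phi W w))) /\
     (forall p, chpair_valid mul one inv p ->
        exists V v, indecomposable V /\ in_some_basis v /\ chpair_eq (Phi V v) p))
  /\
  (* (2) *)
  (exists Psi : rep K mul one -> (G -> Prop) * (G -> K),
     (forall V, indecomposable V -> chpair_valid mul one inv (Psi V)) /\
     (forall V W, indecomposable V -> indecomposable W ->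
        (rep_iso V W <-> chpair_conj mul inv (Psi V) (Psi W))) /\
     (forall p, chpair_valid mul one inv p ->
        exists V, indecomposable V /\ chpair_conj mul inv (Psi V) p)).
Proof.
split; first exact: (classification_of_pairs HG HK HKz).
exact: (classification_of_indecomposables HG HK HKz).
Qed.
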